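(* Let $R$ be a domain and let $G$ be a finite undirected graph without loops with vertex set $A=\{a_1,\dots,a_n\}$, $n\geqslant 2$, such that the complement graph $\overline{G}$ is connected. Let $L(A;G)$ be one of $\mathcal{L}(A;G)$, $\mathcal{M}(A;G)$, $\mathcal{N}_m(A;G)$ ($m\geqslant 2$), and suppose $L(A;G)=L_1\oplus L_2$ is a direct sum of two subalgebras such that for every $i\in\{1,\dots,n\}$ we have $(a_i)_1=a_i+g_i$ and $(a_i)_2=-g_i$ with $g_i\in L(A;G)$ and $a_i\notin\mathrm{supp}(\omega_1(g_i))$. Then $\omega_1(g_i)=0$ for all $i$.
   Context: All Lie algebras are over the domain $R$. The complement graph $\overline{G}$ has vertex set $A$, with distinct vertices adjacent iff they are not adjacent in $G$. The partially commutative Lie algebra in a variety $\mathfrak{M}$ with defining graph $G$ is the Lie algebra presented in $\mathfrak{M}$ by generators $A$ and relations $[a_p,a_q]=0$ for all edges $\{a_p,a_q\}$ of $G$. $\mathcal{L}(A;G)$: $\mathfrak{M}$ = all Lie algebras; $\mathcal{M}(A;G)$: metabelian Lie algebras ($[[x,y],[z,t]]=0$); $\mathcal{N}_m(A;G)$: nilpotent Lie algebras of degree $m$ (all Lie products of $m+1$ elements vanish). Since all relations and identities are multi-homogeneous, every element $h$ is uniquely a sum of nonzero multi-homogeneous components (multi-degree of a Lie monomial = vector counting occurrences of each $a_p$). $\mathrm{supp}(h)$ is the set of $a_p$ occurring with nonzero exponent in the multi-degree of some component of $h$; $\omega_1(h)$ is the sum of the components of length $1$. A direct sum $L=L_1\oplus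 L_2$ of subalgebras means $L_1,L_2$ are subalgebras, $L=L_1\oplus L_2$ as $R$-modules and $[L_1,L_2]=0$; for $h\in L$, $(h)_1\in L_1$, $(h)_2\in L_2$ are the unique elements with $h=(h)_1+(h)_2$. *)

From HB Require Import structures.
From mathcomp Require Import all_boot all_algebra.
Set Implicit Arguments. Unset Strict Implicit. Unset Printing Implicit Defensive.
Import GRing.Theory.
Local Open Scope ring_scope.

Inductive variety := AllLie | Metabelian | Nilpotent of nat.

Definition admissible_variety (V : variety) : Prop :=
  match V with Nilpotent m => (2 <= m)%N | _ => True end.

Section PCLie.
Variable R : idomainType.
Variable n : nat.

(* Formal terms over generators a_0..a_{n-1} (= 'I_n). *)
Inductive lterm : Type :=
| LGen of 'I_n
| LZero
| LAdd of lterm & lterm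
| LScale of R & lterm
| LBr of lterm & lterm.

Inductive lie_product : nat -> lterm -> Prop :=
| lp_one x : lie_product 1 x
| lp_br k l x y : lie_product k x -> lie_product l y ->
    lie_product (k + l) (LBr x y).

(* The congruence presenting L(A;G) in the variety V: R-module axioms,
   bilinearity, alternativity, Jacobi, the identities of V, and the
   defining relations [a_p,a_q] = 0 for edges {a_p,a_q} of G (given by e).
   Elements of L(A;G) are terms modulo lequiv. *)
Inductive lequiv (e : rel 'I_n) (V : variety) : lterm -> lterm -> Prop :=
| le_refl x : lequiv e V x x
| le_sym x y : lequiv e V x y -> lequiv e V y x
| le_trans x y z : lequiv e V x y -> lequiv e V y z -> lequiv e V x z
| le_add x x' y y' : lequiv e V x x' -> lequiv e V y y' ->
    lequiv e V (LAdd x y) (LAdd x' y')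
| le_scale c x x' : lequiv e V x x' -> lequiv e V (LScale c x) (LScale c x')
| le_br x x' y y' : lequiv e V x x' -> lequiv e V y y' ->
    lequiv e V (LBr x y) (LBr x' y')
| le_addA x y z : lequiv e V (LAdd x (LAdd y z)) (LAdd (LAdd x y) z)
| le_addC x y : lequiv e V (LAdd x y) (LAdd y x)
| le_add0 x : lequiv e V (LAdd LZero x) x
| le_addN x : lequiv e V (LAdd x (LScale (-1) x)) LZero
| le_scale1 x : lequiv e V (LScale 1 x) x
| le_scaleA c d x : lequiv e V (LScale c (LScale d x)) (LScale (c * d) x)
| le_scaleDr c x y :
    lequiv e V (LScale c (LAdd x y)) (LAdd (LScale c x) (LScale c y))
| le_scaleDl c d x :
    lequiv e V (LScale (c + d) x) (LAdd (LScale c x) (LScale d x))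
| le_brDl x y z : lequiv e V (LBr (LAdd x y) z) (LAdd (LBr x z) (LBr y z))
| le_brDr x y z : lequiv e V (LBr x (LAdd y z)) (LAdd (LBr x y) (LBr x z))
| le_brZl c x y : lequiv e V (LBr (LScale c x) y) (LScale c (LBr x y))
| le_brZr c x y : lequiv e V (LBr x (LScale c y)) (LScale c (LBr x y))
| le_alt x : lequiv e V (LBr x x) LZero
| le_jacobi x y z :
    lequiv e V (LAdd (LAdd (LBr (LBr x y) z) (LBr (LBr y z) x)) (LBr (LBr z x) y))
      LZero
| le_metab x y z t : V = Metabelian ->
    lequiv e V (LBr (LBr x y) (LBr z t)) LZero
| le_nilp m t : V = Nilpotent m -> lie_product m.+1 t -> lequiv e V t LZero
| le_rel p q : e p q -> lequiv e V (LBr (LGen p) (LGen q)) LZero.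

Inductive lmono : Type := MLeaf of 'I_n | MNode of lmono & lmono.

Fixpoint mono_term (m : lmono) : lterm :=
  match m with MLeaf i => LGen i | MNode a b => LBr (mono_term a) (mono_term b) end.

Fixpoint mdeg (m : lmono) (p : 'I_n) : nat :=
  match m with MLeaf i => (i == p : nat) | MNode a b => (mdeg a p + mdeg b p)%N end.

Fixpoint mlen (m : lmono) : nat :=
  match m with MLeaf _ => 1%N | MNode a b => (mlen a + mlen b)%N end.

Fixpoint expand (t : lterm) : seq (R * lmono) :=
  match t with
  | LGen i => [:: (1, MLeaf i)]
  | LZero => [::]
  | LAdd x y => expand x ++ expand y
  | LScale c x => [seq (c * u.1, u.2) | u <- expand x]
  | LBr x y => [seq (u.1 * v.1, MNode u.2 v.2) | u <- expand x, v <- expand y]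
  end.

Definition lsum (s : seq lterm) : lterm := foldr LAdd LZero s.

Definition component (d : 'I_n -> nat) (t : lterm) : lterm :=
  lsum [seq LScale u.1 (mono_term u.2) |
        u <- expand t & [forall p, mdeg u.2 p == d p]].

Definition omega1 (t : lterm) : lterm :=
  lsum [seq LScale u.1 (mono_term u.2) | u <- expand t & mlen u.2 == 1%N].

Definition in_supp (e : rel 'I_n) (V : variety) (p : 'I_n) (t : lterm) : Prop :=
  exists d : 'I_n -> nat, (0 < d p)%N /\ ~ lequiv e V (component d t) LZero.

(* Subalgebra of L(A;G): a set of terms saturated for lequiv, closed under
   the operations. *)
Definition subalgebra (e : rel 'I_n) (V : variety) (S : lterm -> Prop) : Prop :=
  [/\ (forall x y, lequiv e V x y -> S x -> S y),
      S LZero,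
      (forall x y, S x -> S y -> S (LAdd x y)),
      (forall c x, S x -> S (LScale c x)) &
      (forall x y, S x -> S y -> S (LBr x y))].

Definition direct_sum (e : rel 'I_n) (V : variety) (L1 L2 : lterm -> Prop) : Prop :=
  [/\ subalgebra e V L1, subalgebra e V L2,
      (forall t, exists t1 t2, [/\ L1 t1, L2 t2 & lequiv e V t (LAdd t1 t2)]),
      (forall t, L1 t -> L2 t -> lequiv e V t LZero) &
      (forall x y, L1 x -> L2 y -> lequiv e V (LBr x y) LZero)].

End PCLie.

Definition complement_connected (n : nat) (e : rel 'I_n) : Prop :=
  forall x y : 'I_n, connect (fun u v => (u != v) && ~~ e u v) x y.

(** The coefficient of a generator a_p and, for a non-edge {a_p, a_q} of G,
  the coefficient of [a_p, a_q] in the degree-2 part are well-defined linear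
  functionals on L(A;G): apart from the edge relations, every defining relation
  and identity of the variety has degree at least 3 (here m >= 2 matters).
  Write c_b(q) for the coefficient of a_q in g_b.  The support hypothesis gives
  c_b(b) = 0.  Since the complement of G is connected and n >= 2, every q has a
  non-neighbour z <> q, and reading [a_z + g_z, -g_b] = 0 at the pair (q, z)
  gives c_b(q) = c_z(q) c_b(z).  For b = z this forces c_z(q) = 0, hence
  c_b(q) = 0 for all b, q; so omega_1(g_i) = sum_q c_i(q) a_q vanishes. *)
From mathcomp Require Import all_boot all_algebra.
From mathcomp Require Import ring zify.
Import GRing.Theory.
Local Open Scope ring_scope.
Set Implicit Arguments. Unset Strict Implicit.

Section Coefficients.
Variable R : idomainType.
Variable n : nat.
Variable e : rel 'I_n.
Variable V : variety.

Fixpoint gen_coef (t : lterm R n) (p : 'I_n) : R :=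
  match t with
  | LGen i => (i == p)%:R
  | LZero => 0
  | LAdd x y => gen_coef x p + gen_coef y p
  | LScale c x => c * gen_coef x p
  | LBr _ _ => 0
  end.

Fixpoint bracket_coef (t : lterm R n) (p q : 'I_n) : R :=
  match t with
  | LGen _ | LZero => 0
  | LAdd x y => bracket_coef x p q + bracket_coef y p q
  | LScale c x => c * bracket_coef x p q
  | LBr x y =>
      if e p q then 0 else gen_coef x p * gen_coef y q - gen_coef x q * gen_coef y p
  end.

Lemma lie_product_gt0 k (t : lterm R n) : lie_product k t -> (0 < k)%N.
Proof. by elim=> // k1 l x y _ k1_gt0 _ _; rewrite (leq_trans k1_gt0) ?leq_addr. Qed.

Lemma gen_coef_lie_product k (t : lterm R n) p :
  lie_product k t -> (1 < k)%N -> gen_coef t p = 0.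
Proof. by case. Qed.

Lemma bracket_coef_lie_product k (t : lterm R n) p q :
  lie_product k t -> (2 < k)%N -> bracket_coef t p q = 0.
Proof.
case=> // k1 l x y px py k_gt2 /=; case: (e p q) => //.
have := lie_product_gt0 px; have := lie_product_gt0 py.
case: (ltnP 1 k1) => [k1_gt1 | k1_le1] l_gt0 k1_gt0.
  by rewrite !(gen_coef_lie_product _ px k1_gt1); ring.
have l_gt1 : (1 < l)%N by lia.
by rewrite !(gen_coef_lie_product _ py l_gt1); ring.
Qed.

Hypothesis e_sym : symmetric e.
Hypothesis V_adm : admissible_variety V.

Lemma lequiv_coef x y : lequiv e V x y ->
  (forall p, gen_coef x p = gen_coef y p) /\ (forall p q, bracket_coef x p q = bracket_coef y p q).
Proof.
elim=> {x y} /=.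
- by split.
- by move=> x y _ [E1 E2]; split=> *; rewrite ?E1 ?E2.
- by move=> x y z _ [E1 E2] _ [E3 E4]; split=> *; rewrite ?E1 ?E2 ?E3 ?E4.
- by move=> x x' y y' _ [E1 E2] _ [E3 E4]; split=> *; rewrite ?E1 ?E2 ?E3 ?E4.
- by move=> c x x' _ [E1 E2]; split=> *; rewrite ?E1 ?E2.
- by move=> x x' y y' _ [E1 E2] _ [E3 E4]; split=> *; rewrite ?E1 ?E2 ?E3 ?E4.
all: try by intros; split=> p; intros; simpl; repeat case: ifP => _; ring.
- move=> m t V_nil pt; have m_gt1 : (1 < m)%N by move: V_adm; rewrite V_nil.
  split=> p; first by rewrite (gen_coef_lie_product _ pt) // ltnW.
  by move=> q; rewrite (bracket_coef_lie_product _ _ pt).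
- move=> p q epq; split=> // p' q' /=; case e_pq': (e p' q') => //.
  have : ~~ ((p == p') && (q == q')).
    by apply/negP=> /andP[/eqP pp' /eqP qq']; rewrite -pp' -qq' epq in e_pq'.
  have : ~~ ((p == q') && (q == p')).
    by apply/negP=> /andP[/eqP pq' /eqP qp']; rewrite -pq' -qp' e_sym epq in e_pq'.
  by case: (p == p'); case: (q == q'); case: (p == q'); case: (q == p') => //= _ _; ring.
Qed.

Lemma lequiv_br0_gen_coef x y p q : lequiv e V (LBr x y) (LZero R n) -> ~~ e p q ->
  gen_coef x p * gen_coef y q = gen_coef x q * gen_coef y p.
Proof.
move=> /lequiv_coef[_ /(_ p q)] /= + /negPf epq; rewrite epq => /eqP.
by rewrite subr_eq0 => /eqP.
Qed.

Lemma gen_coef_expand (t : lterm R n) p :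
  gen_coef t p = \sum_(u <- expand t) u.1 * gen_coef (mono_term R u.2) p.
Proof.
elim: t => [i||x IHx y IHy|c x IHx|x _ y _] /=.
- by rewrite big_seq1 mul1r.
- by rewrite big_nil.
- by rewrite big_cat IHx IHy.
- by rewrite big_map IHx big_distrr; apply: eq_bigr => u _; rewrite /= mulrA.
- by rewrite big_allpairs_dep big1 // => u _; rewrite big1 // => v _; rewrite mulr0.
Qed.

Lemma gen_coef_lsum (s : seq (lterm R n)) p :
  gen_coef (lsum s) p = \sum_(x <- s) gen_coef x p.
Proof. by elim: s => [|x s IHs]; rewrite ?big_nil ?big_cons //= IHs. Qed.

Lemma gen_coef_omega1 (t : lterm R n) : gen_coef (omega1 t) =1 gen_coef t.
Proof.
move=> p; rewrite gen_coef_lsum big_map big_filter [RHS]gen_coef_expand big_mkcond.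
by apply: eq_bigr => -[c [j|a b]] _ //=; rewrite mulr0; case: ifP.
Qed.

Lemma gen_coef_component_gen (t : lterm R n) j :
  gen_coef (component (mdeg (MLeaf j)) t) j = gen_coef t j.
Proof.
rewrite gen_coef_lsum big_map big_filter [RHS]gen_coef_expand big_mkcond.
apply: eq_bigr => -[c [k|a b]] _ /=; last by rewrite mulr0; case: ifP.
have [->|kj] := eqVneq k j; last by rewrite mulr0; case: ifP.
by have -> : [forall p, ((j == p) : nat) == (j == p)] by apply/forallP.
Qed.

Lemma not_in_supp_omega1 t j : ~ in_supp e V j (omega1 t) -> gen_coef t j = 0.
Proof.
move=> not_supp; apply/eqP/negP=> tj_neq0; apply: not_supp.
exists (mdeg (MLeaf j)); split; first by rewrite /= eqxx.
move=> /lequiv_coef[/(_ j) + _].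
by rewrite gen_coef_component_gen gen_coef_omega1 => tj0; rewrite tj0 eqxx in tj_neq0.
Qed.

End Coefficients.

Section LinearCombinations.
Variable R : idomainType.
Variable n : nat.
Variable e : rel 'I_n.
Variable V : variety.

Local Notation leqv := (lequiv e V).
Local Notation lzero := (LZero R n).

Lemma lequiv_scale0 x : leqv (LScale 0 x) lzero.
Proof.
set y := LScale 0 x; set z := LScale (-1) y.
have y_yy : leqv (LScale (0 + 0) x) (LAdd y y) by apply: le_scaleDl.
rewrite addr0 in y_yy.
apply: le_sym; apply: le_trans (le_sym (le_addN e V y)) _.
apply: le_trans (le_add y_yy (le_refl e V z)) _.
apply: le_trans (le_sym (le_addA e V y y z)) _.
apply: le_trans (le_add (le_refl e V y) (le_addN e V y)) _.
exact: le_trans (le_addC e V y lzero) (le_add0 e V y).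
Qed.

Definition lin_comb (r : seq 'I_n) (f : 'I_n -> R) : lterm R n :=
  lsum [seq LScale (f k) (LGen R k) | k <- r].

Lemma lin_comb_eq0 r f : (forall k, f k = 0) -> leqv (lin_comb r f) lzero.
Proof.
move=> f0; elim: r => [|k r IHr]; rewrite /lin_comb /=; first exact: le_refl.
rewrite f0; exact: le_trans (le_add (lequiv_scale0 _) IHr) (le_add0 _ _ _).
Qed.

Lemma lequiv_lin_comb r f f' : f =1 f' -> leqv (lin_comb r f) (lin_comb r f').
Proof.
move=> ff'; rewrite /lin_comb (@eq_map _ _ _ (fun k => LScale (f' k) (LGen R k))) => [|k].
  exact: le_refl.
by rewrite ff'.
Qed.

Lemma lin_comb_addl r f c j : uniq r -> j \in r ->
  leqv (LAdd (LScale c (LGen R j)) (lin_comb r f))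
       (lin_comb r (fun k => f k + (if k == j then c else 0))).
Proof.
elim: r => [|k r IHr] //= /andP[k_notin_r r_uniq].
rewrite in_cons => /orP[/eqP -> | j_in_r]; rewrite /lin_comb /=.
- have -> : [seq LScale (f k0 + (if k0 == k then c else 0)) (LGen R k0) | k0 <- r]
          = [seq LScale (f k0) (LGen R k0) | k0 <- r].
    by apply/eq_in_map=> k0 k0_in_r; rewrite ifN ?addr0 //; apply: contraNneq k_notin_r => <-.
  rewrite eqxx; apply: le_trans (le_addA _ _ _ _ _) (le_add _ (le_refl _ _ _)).
  exact: le_trans (le_addC _ _ _ _) (le_sym (le_scaleDl _ _ _ _ _)).
- have kj : k != j by apply: contraNneq k_notin_r => ->.
  rewrite ifN // addr0; apply: le_trans (le_addA _ _ _ _ _) _.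
  apply: le_trans (le_add (le_addC _ _ _ _) (le_refl _ _ _)) _.
  apply: le_trans (le_sym (le_addA _ _ _ _ _)) _.
  exact: le_add (le_refl _ _ _) (IHr _ _).
Qed.

Lemma mlen_gt0 (m : lmono n) : (0 < mlen m)%N.
Proof. by elim: m => //= a a_gt0 b _; rewrite (leq_trans a_gt0) ?leq_addr. Qed.

Lemma lsum_gens_lin_comb (s : seq (R * lmono n)) : all (fun u => mlen u.2 == 1%N) s ->
  leqv (lsum [seq LScale u.1 (mono_term R u.2) | u <- s])
       (lin_comb (enum 'I_n) (fun k => \sum_(u <- s) u.1 * gen_coef (mono_term R u.2) k)).
Proof.
elim: s => [|[c m] s IHs] /=.
  by move=> _; apply: le_sym; apply: lin_comb_eq0 => k; rewrite big_nil.
move=> /andP[m1 /IHs s_lin].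
case: m m1 => [j _|a b] /=; last by have := mlen_gt0 a; have := mlen_gt0 b; lia.
apply: le_trans (le_add (le_refl _ _ _) s_lin) _.
apply: le_trans (lin_comb_addl _ c (enum_uniq _) (mem_enum _ j)) _.
apply: lequiv_lin_comb => k; rewrite big_cons /=.
have [->|kj] := eqVneq k j; first by rewrite mulr1n mulr1 addrC.
by rewrite mulr0n mulr0 addr0 add0r.
Qed.

Lemma omega1_lin_comb t : leqv (omega1 t) (lin_comb (enum 'I_n) (gen_coef t)).
Proof.
apply: le_trans (lsum_gens_lin_comb (filter_all _ _)) _.
by apply: lequiv_lin_comb => k; rewrite -(gen_coef_omega1 t k) gen_coef_lsum big_map.
Qed.

End LinearCombinations.

Lemma complement_neighbor n (e : rel 'I_n) : (1 < n)%N -> complement_connected e ->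
  forall q, exists2 z, q != z & ~~ e q z.
Proof.
move=> n_gt1 e_conn q.
have [y yq] : exists y : 'I_n, y != q.
  have n_gt0 : (0 < n)%N by apply: ltnW.
  have [q0|q_neq0] := eqVneq q (Ordinal n_gt0); last by exists (Ordinal n_gt0); rewrite eq_sym.
  by exists (Ordinal n_gt1); rewrite q0 -val_eqE.
have /connectP[[|z p] /=] := e_conn q y; first by move=> _ yq'; rewrite yq' eqxx in yq.
by move=> /andP[/andP[qz not_eqz] _] _; exists z.
Qed.

Unset Implicit Arguments.
Theorem lemma3 (R : idomainType) (n : nat) (e : rel 'I_n) (V : variety)
    (L1 L2 : lterm R n -> Prop) (g : 'I_n -> lterm R n) :
  (2 <= n)%N -> symmetric e -> irreflexive e -> complement_connected e ->
  admissible_variety V ->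
  direct_sum e V L1 L2 ->
  (forall i, L1 (LAdd (LGen R i) (g i)) /\ L2 (LScale (-1) (g i))) ->
  (forall i, ~ in_supp e V i (omega1 (g i))) ->
  forall i, lequiv e V (omega1 (g i)) (LZero R n).
Proof.
move=> n_gt1 e_sym _ e_conn V_adm [_ _ _ _ br0] g_split g_supp.
have g_diag j : gen_coef (g j) j = 0 := not_in_supp_omega1 e_sym V_adm (g_supp j).
have g0 b q : gen_coef (g b) q = 0.
  have [z qz not_eqz] := complement_neighbor n_gt1 e_conn q.
  have comm a := lequiv_br0_gen_coef e_sym V_adm
    (br0 _ _ (g_split z).1 (g_split a).2) not_eqz.
  have := comm z; have := comm b => /=.
  rewrite eqxx g_diag eq_sym (negPf qz) add0r addr0 !mul1r => cb cz.
  have gzq : gen_coef (g z) q = 0.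
    by apply/eqP; rewrite -oppr_eq0 -mulN1r -cz !mulr0.
  by apply/eqP; rewrite -oppr_eq0 -mulN1r -cb gzq mul0r.
by move=> i; apply: le_trans (omega1_lin_comb _ _ _) (lin_comb_eq0 _ _ _ (g0 i)).
Qed.
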